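(* Let $G=(V_L,V_R,E)$ be a bipartite graph in which every vertex of $V_L$ has degree at most $\Delta_L$ and every vertex of $V_R$ has degree at least $2$. Let $M\subseteq V_R$ be such that every $v\in V_L$ has exactly one neighbour in $M$. Then for every $u\in V_L$ and $k\ge1$, the number of connected induced subgraphs $G'$ of $G$ such that (1) $u\in V(G')$, (2) $|V(G')\cap V_R|=k$, (3) $\Gamma_G(v)\subseteq V(G')$ for every $v\in V(G')\cap V_R$, and (4) every $v\in V(G')\cap V_L$ has exactly one neighbour in $V(G')\cap M$ and exactly one neighbour in $V(G')\cap(V_R\setminus M)$, is at most $(\Delta_L-1)^{k-1}$.
   Context: $\Gamma_G(v)$ denotes the set of neighbours of $v$ in $G$. *)

From mathcomp Require Import all_boot.
Set Implicit Arguments. Unset Strict Implicit. Unset Printing Implicit Defensive.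

(* A finite bipartite graph G = (V_L, V_R, E) is given by finite types L, R
   and an adjacency relation adj : L -> R -> bool.  Its vertex type is L + R. *)

Section Bip.
Variables (L R : finType) (adj : L -> R -> bool).

Definition bip_edge (x y : L + R) : bool :=
  match x, y with
  | inl a, inr b => adj a b
  | inr b, inl a => adj a b
  | _, _ => false
  end.

Definition nbhdL (a : L) : {set R} := [set b | adj a b].
Definition nbhdR (b : R) : {set L} := [set a | adj a b].

Definition induced_connected (S : {set L + R}) : bool :=
  [forall x in S, forall y in S,
    connect (fun a b => [&& a \in S, b \in S & bip_edge a b]) x y].

Definition partL (S : {set L + R}) : {set L} := [set a | inl a \in S].
Definition partR (S : {set L + R}) : {set R} := [set b | inr b \in S].

End Bip.

(* Call S (a vertex set of G = (V_L, V_R, E)) balanced when every R-vertex of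
   S has its whole neighbourhood in S and every L-vertex of S has exactly one
   neighbour in S inside M and exactly one inside V_R \ M.  The L-part of a
   balanced S is then determined by its R-part (an L-vertex lies in S iff it
   has a neighbour in S), so it suffices to count the possible R-parts.

   We count the connected balanced S with |S ∩ V_R| = k containing a given
   nonempty set D of R-vertices, by induction on k - |D|.  If some L-vertex a
   adjacent to D has its M-neighbour outside D, that neighbour is forced into
   S.  If a has no non-M neighbour in D, then S contains one of the at most
   DeltaL - 1 non-M neighbours of a: branch.  Otherwise D is "saturated", and
   connectivity forces S ∩ V_R = D.  The theorem is the case D = {m0}, with m0
   the M-neighbour of u, which lies in every counted S. *)

From mathcomp Require Import all_boot.
Set Implicit Arguments. Unset Strict Implicit. Unset Printing Implicit Defensive.

Lemma card_bigcup_le (T I : finType) (A : {pred I}) (F : I -> {set T}) :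
  #|\bigcup_(i in A) F i| <= \sum_(i in A) #|F i|.
Proof.
elim/big_rec2: _ => [|i U s _ IH]; first by rewrite cards0.
by apply: leq_trans (leq_card_setU _ _).1 _; rewrite leq_add2l.
Qed.

Lemma card1_elem (T : finType) (A : {set T}) :
  #|A| = 1 -> exists2 x, x \in A & forall y, y \in A -> y = x.
Proof.
by move/eqP/cards1P=> [x ->]; exists x => [|y /set1P]; rewrite ?set11.
Qed.

Section Balanced.
Variables (L R : finType) (adj : L -> R -> bool) (M : {set R}).
Hypothesis HM : forall a : L, #|nbhdL adj a :&: M| = 1.

Definition balanced (S : {set L + R}) : bool :=
  [forall b in partR S, nbhdR adj b \subset partL S] &&
  [forall a in partL S,
     (#|nbhdL adj a :&: (partR S :&: M)| == 1) &&
     (#|nbhdL adj a :&: (partR S :\: M)| == 1)].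

Lemma balanced_closedR S a b :
  balanced S -> inr b \in S -> adj a b -> inl a \in S.
Proof.
case/andP=> /forallP/(_ b) + _ bS ab; rewrite inE bS /= => /subsetP/(_ a).
by rewrite !inE; apply.
Qed.

Lemma balanced_L S a : balanced S -> inl a \in S ->
  #|nbhdL adj a :&: (partR S :&: M)| = 1 /\
  #|nbhdL adj a :&: (partR S :\: M)| = 1.
Proof.
by case/andP=> _ /forallP/(_ a) + aS; rewrite inE aS => /andP[/eqP-> /eqP->].
Qed.

(* Since every L-vertex has a unique M-neighbour in G, the M-neighbour of an
   L-vertex of a balanced S lies in S. *)
Lemma balanced_nbrM S a m :
  balanced S -> inl a \in S -> adj a m -> m \in M -> inr m \in S.
Proof.
move=> bal aS am mM; have [/card1_elem[x + _] _] := balanced_L bal aS.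
rewrite !inE => /andP[ax /andP[xS xM]].
have [y _ uniqM] := card1_elem (HM a).
have Ex : x = y by apply: uniqM; rewrite !inE ax xM.
have Em : m = y by apply: uniqM; rewrite !inE am mM.
by rewrite Em -Ex.
Qed.

Lemma balanced_nbr_nonM S a : balanced S -> inl a \in S ->
  exists2 c, inr c \in S & c \in nbhdL adj a :\: M.
Proof.
move=> bal aS; have [_ /card1_elem[c + _]] := balanced_L bal aS.
by rewrite !inE => /andP[ac /andP[cM cS]]; exists c; rewrite // !inE cM ac.
Qed.

Lemma balanced_nonM_uniq S a c c' : balanced S -> inl a \in S ->
  inr c \in S -> c \in nbhdL adj a :\: M ->
  inr c' \in S -> c' \in nbhdL adj a :\: M -> c = c'.
Proof.
move=> bal aS cS + c'S; rewrite !inE => /andP[cM ac] /andP[c'M ac'].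
have [_ /card1_elem[x _ uniq]] := balanced_L bal aS.
have -> : c = x by apply: uniq; rewrite !inE ac cS cM.
by apply/esym/uniq; rewrite !inE ac' c'S c'M.
Qed.

Lemma balanced_inl S a :
  balanced S -> (inl a \in S) = [exists b, (inr b \in S) && adj a b].
Proof.
move=> bal; apply/idP/existsP => [aS | [b /andP[bS ab]]].
  have [c cS] := balanced_nbr_nonM bal aS; rewrite !inE => /andP[_ ac].
  by exists c; rewrite cS.
exact: balanced_closedR bal bS ab.
Qed.

Lemma balanced_partR_inj S1 S2 :
  balanced S1 -> balanced S2 -> partR S1 = partR S2 -> S1 = S2.
Proof.
move=> bal1 bal2 E; have inR b : (inr b \in S1) = (inr b \in S2).
  by have := congr1 (fun X : {set R} => b \in X) E; rewrite !inE.
apply/setP=> [[a|b]]; last exact: inR.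
by rewrite (balanced_inl a bal1) (balanced_inl a bal2); apply: eq_existsb => b; rewrite inR.
Qed.

Lemma card_nbhd_nonM a : #|nbhdL adj a :\: M| = #|nbhdL adj a| - 1.
Proof. by rewrite cardsD HM. Qed.

(* D ⊆ V_R is saturated when every L-vertex touching D has its M-neighbour
   in D and some non-M neighbour in D: no balanced set is forced beyond D. *)
Definition saturated (D : {set R}) : bool :=
  [forall a, [exists d in D, adj a d] ==>
     (nbhdL adj a :&: M \subset D) && [exists d in D :\: M, adj a d]].

(* A connected balanced S containing a nonempty saturated D has R-part D:
   the vertices of D together with the L-vertices touching D form a set
   closed under the edges of G[S]. *)
Lemma saturated_partR S (D : {set R}) d0 : induced_connected adj S -> balanced S ->
  D \subset partR S -> d0 \in D -> saturated D -> partR S \subset D.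
Proof.
move=> conn bal DS d0D sat; apply/subsetP=> t; rewrite inE => tS.
have inS d : d \in D -> inr d \in S by move=> dD; have := subsetP DS d dD; rewrite inE.
pose e x y := [&& x \in S, y \in S & bip_edge adj x y].
pose X (x : L + R) := if x is inl a then [exists d in D, adj a d] else
                      if x is inr b then b \in D else false.
have e_sym x y : e x y = e y x by case: x y => [?|?] [?|?]; rewrite /e /= andbCA.
have X_fwd x y : e x y -> X x -> X y.
  case: x y => [a|b] [a'|b'] /and3P[xS yS /= xy] //=; last first.
    by move=> bD; apply/exists_inP; exists b.
  move=> aD; have /andP[/subsetP subM /exists_inP[d dDM ad]] := implyP (forallP sat a) aD.
  case: (boolP (b' \in M)) => b'M; first by apply: subM; rewrite !inE xy.
  move: dDM; rewrite inE => /andP[dM dD].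
  have -> : b' = d by apply: (balanced_nonM_uniq bal xS) => //; rewrite ?inS // !inE ?b'M ?dM.
  exact: dD.
have X_closed : closed e X.
  by move=> x y exy; apply/idP/idP; apply: X_fwd; rewrite // e_sym.
move/forall_inP/(_ _ (inS _ d0D))/forall_inP/(_ _ tS): conn => conn.
by have := closed_connect X_closed conn; rewrite -!topredE /X /= d0D.
Qed.

Lemma forced_growth S (D : {set R}) a b m : balanced S -> D \subset partR S ->
  b \in D -> adj a b -> m \in nbhdL adj a :&: M -> m |: D \subset partR S.
Proof.
move=> bal DS bD ab; rewrite !inE => /andP[am mM]; rewrite subUset DS andbT sub1set inE.
have aS : inl a \in S by apply: balanced_closedR bal _ ab; have := subsetP DS b bD; rewrite inE.
exact: balanced_nbrM bal aS am mM.
Qed.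

Lemma branch_growth S (D : {set R}) a b : balanced S -> D \subset partR S ->
  b \in D -> adj a b -> exists2 c, c \in nbhdL adj a :\: M & c |: D \subset partR S.
Proof.
move=> bal DS bD ab.
have aS : inl a \in S by apply: balanced_closedR bal _ ab; have := subsetP DS b bD; rewrite inE.
have [c cS cN] := balanced_nbr_nonM bal aS.
by exists c; rewrite // subUset DS andbT sub1set inE.
Qed.

Lemma unsaturated_cases (D : {set R}) : ~~ saturated D ->
  exists a b, [/\ b \in D, adj a b &
    (exists2 m, m \in nbhdL adj a :&: M & m \notin D) \/
    {in nbhdL adj a :\: M, forall c, c \notin D}].
Proof.
case/forallPn=> a; rewrite negb_imply => /andP[/exists_inP[b bD ab]].
rewrite negb_and => /orP[/subsetPn[m mN mD] | noD]; exists a, b; split => //.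
  by left; exists m.
right=> c; rewrite !inE => /andP[cM ac]; apply: contra noD => cD.
by apply/exists_inP; exists c; rewrite // !inE cM cD.
Qed.

End Balanced.

Section Counting.
Variables (L R : finType) (adj : L -> R -> bool) (M : {set R}) (DeltaL : nat).
Hypothesis HM : forall a : L, #|nbhdL adj a :&: M| = 1.
Hypothesis degL : forall a : L, #|nbhdL adj a| <= DeltaL.

Definition admissible (k : nat) (S : {set L + R}) : bool :=
  [&& induced_connected adj S, #|partR S| == k & balanced adj M S].

Definition extensions (k : nat) (D : {set R}) : {set {set L + R}} :=
  [set S | admissible k S & D \subset partR S].

Lemma extensionsP k D S : S \in extensions k D ->
  [/\ induced_connected adj S, #|partR S| = k, balanced adj M S & D \subset partR S].
Proof. by rewrite inE => /andP[/and3P[conn /eqP cardS bal] DS]. Qed.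

Lemma card_extensions_le1 k D :
  {in extensions k D, forall S, partR S = D} -> #|extensions k D| <= 1.
Proof.
move=> fixed; apply/card_le1_eqP => S1 S2 S1E S2E.
have [_ _ bal1 _] := extensionsP S1E; have [_ _ bal2 _] := extensionsP S2E.
by apply/esym/(balanced_partR_inj bal1 bal2); rewrite !fixed.
Qed.

Lemma extensions_sub k (D D' : {set R}) :
  (forall S, balanced adj M S -> D \subset partR S -> D' \subset partR S) ->
  extensions k D \subset extensions k D'.
Proof.
move=> DD'; apply/subsetP=> S SE; have [_ _ bal DS] := extensionsP SE.
by move: SE; rewrite !inE => /andP[-> _]; exact: DD'.
Qed.

Lemma extensions_branch k (D : {set R}) a b : b \in D -> adj a b ->
  extensions k D \subset \bigcup_(c in nbhdL adj a :\: M) extensions k (c |: D).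
Proof.
move=> bD ab; apply/subsetP=> S SE; have [_ _ bal DS] := extensionsP SE.
have [c cN cDS] := branch_growth bal DS bD ab.
by apply/bigcupP; exists c; move: SE; rewrite // !inE cDS andbT => /andP[].
Qed.

(* The main count, by induction on the number k - |D| of R-vertices still to
   be chosen: each step either forces a vertex (no cost) or branches over at
   most DeltaL - 1 choices, and a saturated D admits at most one extension. *)
Lemma card_extensions k n (D : {set R}) d0 : 1 < DeltaL ->
  d0 \in D -> k - #|D| = n -> #|extensions k D| <= (DeltaL - 1) ^ n.
Proof.
move=> hD; elim: n D => [|n IH] D d0D Hn.
  apply: card_extensions_le1 => S /extensionsP[_ cardS _ DS].
  by apply/eqP; rewrite eq_sym eqEcard DS cardS -subn_eq0 Hn.
have grow c : c \notin D -> #|extensions k (c |: D)| <= (DeltaL - 1) ^ n.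
  by move=> cD; apply: (IH _ (setU1r c d0D)); rewrite cardsU1 cD add1n subnS Hn.
case: (boolP (saturated adj M D)) => [sat | /unsaturated_cases[a [b [bD ab]]]].
  apply: leq_trans (card_extensions_le1 _) _; last by rewrite expn_gt0 subn_gt0 hD.
  move=> S /extensionsP[conn _ bal DS]; apply/eqP.
  by rewrite eqEsubset DS (saturated_partR conn bal DS d0D sat).
case=> [[m mN mD] | fresh].
  have ext_forced : extensions k D \subset extensions k (m |: D).
    by apply: extensions_sub => S bal DS; apply: (forced_growth HM bal DS bD ab mN).
  apply: leq_trans (subset_leq_card ext_forced) _.
  apply: leq_trans (grow m mD) _.
  by rewrite expnS leq_pmull // subn_gt0.
apply: leq_trans (subset_leq_card (extensions_branch k bD ab)) _.
apply: leq_trans (card_bigcup_le _ _) _.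
apply: (@leq_trans (\sum_(c in nbhdL adj a :\: M) (DeltaL - 1) ^ n)).
  by apply: leq_sum => c cN; apply: grow (fresh c cN).
rewrite sum_nat_const expnS leq_mul2r (card_nbhd_nonM HM).
by rewrite leq_sub2r ?degL ?orbT.
Qed.

End Counting.

(* The counted sets are admissible extensions of {m0}, where m0
   is the M-neighbour of u; if there are any, u has distinct M- and non-M
   neighbours, so DeltaL >= 2. *)
Theorem mainTheorem16 (L R : finType) (adj : L -> R -> bool) (DeltaL : nat)
  (degL : forall a : L, #|nbhdL adj a| <= DeltaL)
  (degR : forall b : R, 2 <= #|nbhdR adj b|)
  (M : {set R})
  (HM : forall a : L, #|nbhdL adj a :&: M| = 1)
  (u : L) (k : nat) (hk : 1 <= k) :
  #|[set S : {set L + R} |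
      [&& induced_connected adj S,
          inl u \in S,
          #|partR S| == k,
          [forall b in partR S, nbhdR adj b \subset partL S] &
          [forall a in partL S,
             (#|nbhdL adj a :&: (partR S :&: M)| == 1) &&
             (#|nbhdL adj a :&: (partR S :\: M)| == 1)]]]|
  <= (DeltaL - 1) ^ (k - 1).
Proof.
set F := [set S | _].
have inF S : S \in F -> [/\ admissible adj M k S, balanced adj M S & inl u \in S].
  rewrite inE => /and5P[conn uS cardS NR NL].
  by rewrite /admissible /balanced NR NL conn cardS uS.
have [-> | [S0 /inF[_ bal0 uS0]]] := set_0Vmem F; first by rewrite cards0.
have hD : 1 < DeltaL.
  have [c _ cN] := balanced_nbr_nonM bal0 uS0.
  have : 0 < #|nbhdL adj u :\: M| by apply/card_gt0P; exists c.
  rewrite (card_nbhd_nonM HM) => /leq_trans/(_ (leq_sub2r 1 (degL u))).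
  by rewrite subn_gt0.
have [m0 m0N _] := card1_elem (HM u).
have F_ext : F \subset extensions adj M k [set m0].
  apply/subsetP=> S /inF[adm bal uS]; rewrite inE adm sub1set inE.
  by move: m0N; rewrite !inE => /andP[um0 m0M]; apply: (balanced_nbrM HM bal uS um0 m0M).
apply: leq_trans (subset_leq_card F_ext) _.
by apply: (card_extensions HM degL hD (set11 m0)); rewrite cards1.
Qed.
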